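(* Let $n\in\mathbb{N}$. Then: (i) the number of distinct nilpotent semigroups of degree $3$ on the set $\{1,2,\ldots,n\}$ (i.e. the number of associative multiplications on this set making it a nilpotent semigroup of degree $3$) is \[ \sum_{m=2}^{a(n)}\binom{n}{m}\, m\sum_{i=0}^{m-1}(-1)^i\binom{m-1}{i}(m-i)^{\left((n-m)^2\right)},\qquad a(n)=\left\lfloor n+\tfrac12-\sqrt{n-\tfrac34}\,\right\rfloor; \] (ii) the number of distinct commutative nilpotent semigroups of degree $3$ on $\{1,2,\ldots,n\}$ is \[ \sum_{m=2}^{c(n)}\binom{n}{m}\, m\sum_{i=0}^{m-1}(-1)^i\binom{m-1}{i}(m-i)^{(n-m)(n-m+1)/2},\qquad c(n)=\left\lfloor n+\tfrac32-\sqrt{2n+\tfrac14}\,\right\rfloor. \] (Empty sums are $0$.)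
   Context: For a semigroup $S$ and $r\in\mathbb{N}$ let $S^r=\{s_1s_2\cdots s_r : s_1,\ldots,s_r\in S\}$. A semigroup $S$ is nilpotent if $|S^r|=1$ for some $r\in\mathbb{N}$, and it has (nilpotency) degree $r$ if $r$ is the least such number. Thus $S$ is nilpotent of degree $3$ iff $S$ has a zero, every product of three elements equals the zero, and some product of two elements is non-zero. Counting ''on a set'' means counting distinct multiplication tables (up to equality). *)

From Stdlib Require Import Reals.
From Stdlib Require Import ZArith.

(* a(n) = floor(n + 1/2 - sqrt(n - 3/4)), truncated to nat (negative values give 0,
   which makes the sum from m = 2 empty, as intended). *)
Definition a_bound (n : nat) : nat :=
  Z.to_nat (Int_part (INR n + / 2 - sqrt (INR n - 3 / 4))%R).

Definition c_bound (n : nat) : nat :=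
  Z.to_nat (Int_part (INR n + 3 / 2 - sqrt (2 * INR n + / 4))%R).

From HB Require Import structures.
From mathcomp Require Import all_boot all_order all_algebra.
Set Implicit Arguments. Unset Strict Implicit. Unset Printing Implicit Defensive.

(* A multiplication table on the set {1,...,n}, represented as 'I_n. *)
Definition table (n : nat) := {ffun 'I_n * 'I_n -> 'I_n}.

Definition is_assoc n (f : table n) : bool :=
  [forall x, forall y, forall z, f (f (x, y), z) == f (x, f (y, z))].

Definition is_comm n (f : table n) : bool :=
  [forall x, forall y, f (x, y) == f (y, x)].

(* S^r = set of products s_1 ... s_r (left-bracketed; for associative f this is
   the set of all products of r elements).  S^1 = S; S^0 is set to S (unused). *)
Fixpoint Spow n (f : table n) (r : nat) : {set 'I_n} :=
  match r with
  | 0 => setT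
  | 1 => setT
  | r'.+1 => [set f (x, y) | x in Spow f r', y in setT]
  end.

Definition nil_degree n (f : table n) (r : nat) : bool :=
  [&& is_assoc f, 0 < r, #|Spow f r| == 1
    & [forall k : 'I_r, (0 < k) ==> (#|Spow f k| != 1)]].

From Stdlib Require Import Reals Lra Lia ZArith.
From HB Require Import structures.
From mathcomp Require Import all_boot all_order all_algebra.
From mathcomp Require Import ring zify.
Set Implicit Arguments. Unset Strict Implicit. Unset Printing Implicit Defensive.
Import GRing.Theory.

(* A table f is a nilpotent semigroup of degree 3 with S^2 = A and S^3 = {z}
   iff z lies in A, #|A| >= 2, every product with a factor in A equals z, every
   product of two elements outside A lies in A, and these "free" products cover
   A \ {z} (nil3_shapeE); associativity then holds automatically. So the tables
   with given A and z are the maps from the (n - m)^2 free pairs into A whose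
   image covers the m - 1 elements of A \ {z}, where m = #|A|. Inclusion-
   exclusion (ncoverE) counts them as sum_i (-1)^i C(m-1, i) (m - i)^((n-m)^2).
   Summing over the C(n, m) sets A and the m choices of z gives the formula with
   m ranging over 2..n (card_nil3).  A commutative table is determined by its
   values on the (n - m)(n - m + 1)/2 unordered free pairs (card_comm_nil3).
   Finally the terms with m > a(n) (resp. c(n)) vanish: by the floor estimates
   a_bound_ge and c_bound_ge, there are then fewer free pairs than elements of
   A \ {z} to cover (term_eq0). *)

Section Coverings.
Variables (D T : finType) (z : T).

Definition supported_in (E : {set D}) (A : {set T}) (g : {ffun D -> T}) : bool :=
  [forall d, if d \in E then g d \in A else g d == z].

Definition ncover (E : {set D}) (A C : {set T}) : nat :=
  #|[set g | supported_in E A g && (C \subset g @: E)]|.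

Lemma ncover_set0 (E : {set D}) (A : {set T}) : ncover E A set0 = #|A| ^ #|E|.
Proof.
rewrite /ncover -(card_pffun_on z); apply: eq_card => g.
rewrite inE sub0set andbT; apply/forallP/familyP => gE d; have := gE d;
  by rewrite /= ?inE; case: (d \in E) => //=; rewrite inE.
Qed.

(* Inclusion-exclusion step: the coverings of C \ c split into those that also
   hit c and those that avoid c, i.e. take values in A \ c. *)
Lemma ncover_split (E : {set D}) (A C : {set T}) (c : T) : c \in C -> C \subset A ->
  ncover E A C + ncover E (A :\ c) (C :\ c) = ncover E A (C :\ c).
Proof.
move=> cC sCA; rewrite /ncover.
set X := [set g | supported_in E A g && (C :\ c \subset g @: E)].
rewrite -(cardsID [set g : {ffun D -> T} | c \in g @: E] X); congr (_ + _);
  apply: eq_card => g; rewrite !inE.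
- rewrite -andbA; congr (_ && _).
  by rewrite -{1}(setD1K cC) subUset sub1set andbC.
- rewrite [RHS]andbA; congr (_ && _); rewrite /supported_in.
  apply/idP/andP => [gA | [c_notin gA]].
  + split.
      apply/negP => /imsetP[d dE gdc]; move/forallP: gA => /(_ d); rewrite dE.
      by rewrite -gdc !inE eqxx.
    apply/forallP => d; move/forallP: gA => /(_ d).
    by case: ifP => // dE; rewrite !inE => /andP[].
  + apply/forallP => d; move/forallP: gA => /(_ d).
    case: ifP => // dE; rewrite !inE => ->; rewrite andbT.
    by apply: contraNneq c_notin => <-; apply: imset_f.
Qed.

Local Open Scope ring_scope.

Definition alt_sum (e a k : nat) : int :=
  \sum_(0 <= i < k.+1) (-1) ^+ i * ('C(k, i))%:Z * (((a - i) ^ e)%N)%:Z.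

(* Pascal's rule turns alt_sum into the recurrence matching ncover_split. *)
Lemma alt_sumS (e a k : nat) : alt_sum e a k.+1 = alt_sum e a k - alt_sum e a.-1 k.
Proof.
rewrite /alt_sum big_nat_recl //.
have -> : \sum_(0 <= i < k.+1)
              (-1) ^+ i.+1 * ('C(k.+1, i.+1))%:Z * (((a - i.+1) ^ e)%N)%:Z
  = \sum_(0 <= i < k.+1) (-1) ^+ i.+1 * ('C(k, i.+1))%:Z * (((a - i.+1) ^ e)%N)%:Z
    - \sum_(0 <= i < k.+1) (-1) ^+ i * ('C(k, i))%:Z * (((a.-1 - i) ^ e)%N)%:Z.
  rewrite -sumrB; apply: eq_bigr => i _.
  by rewrite binS PoszD -subn1 -subnDA add1n exprS; ring.
rewrite addrA; congr (_ - _).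
rewrite bin0 -(bin0 k) -(big_nat_recl k.+1 0
  (fun i => (-1) ^+ i * ('C(k, i))%:Z * (((a - i) ^ e)%N)%:Z)) //.
by rewrite big_nat_recr //= bin_small // mulr0 mul0r addr0.
Qed.

Lemma ncoverE (E : {set D}) (k : nat) (A C : {set T}) :
  #|C| = k -> C \subset A -> (ncover E A C)%:Z = alt_sum #|E| #|A| k.
Proof.
elim: k A C => [|k IHk] A C cardC sCA.
  by rewrite (cards0_eq cardC) ncover_set0 /alt_sum big_nat1 bin0 subn0 !mul1r.
have [c cC] : exists c, c \in C by apply/set0Pn; rewrite -card_gt0 cardC.
have cA : c \in A := subsetP sCA c cC.
have cardCc : #|C :\ c| = k by move: cardC; rewrite (cardsD1 c) cC add1n => -[].
have := ncover_split E cC sCA => /(congr1 Posz); rewrite PoszD => split_eq.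
rewrite -[LHS](addrK (ncover E (A :\ c) (C :\ c))%:Z) split_eq.
rewrite IHk //; last exact: subset_trans (subD1set C c) sCA.
rewrite IHk //; last exact: setSD.
by rewrite alt_sumS [#|A|](cardsD1 c) cA add1n.
Qed.

End Coverings.

Lemma ncover_eq0 (D T : finType) (z : T) (E : {set D}) (A C : {set T}) :
  #|E| < #|C| -> ncover z E A C = 0%N.
Proof.
move=> lt_EC; apply: eq_card0 => g; rewrite inE; apply/negP => /andP[_ sCg].
have := leq_trans (subset_leq_card sCg) (leq_imset_card g E).
by rewrite leqNgt lt_EC.
Qed.

Lemma alt_sum_eq0 (e m : nat) : e < m -> alt_sum e m.+1 m = 0%R.
Proof.
move=> lt_em.
have := @ncoverE 'I_e 'I_m.+1 ord0 setT m setT [set~ ord0].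
rewrite cardsC1 card_ord => /(_ erefl (subsetT _)).
rewrite !cardsT !card_ord => <-.
by rewrite ncover_eq0 // cardsT cardsC1 !card_ord.
Qed.

Section InnerSum.
Local Open Scope ring_scope.

(* The inner sum of the theorem, for a set S^2 of size m, where e m is the number
   of products that are not forced to be the zero. *)
Definition inner_sum (e : nat -> nat) (m : nat) : int :=
  \sum_(0 <= i < m) (-1) ^+ i * ('C(m.-1, i))%:Z * (((m - i) ^ (e m))%N)%:Z.

Lemma inner_sumE (e : nat -> nat) (m : nat) :
  (0 < m)%N -> inner_sum e m = alt_sum (e m) m m.-1.
Proof. by case: m. Qed.

Lemma inner_sum_eq0 (e : nat -> nat) (m : nat) :
  (1 < m)%N -> (e m < m.-1)%N -> inner_sum e m = 0.
Proof. by case: m => // m _ lt_em; rewrite inner_sumE // alt_sum_eq0. Qed.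

End InnerSum.

Lemma card_set_cond (T : finType) (P : {set T}) (Q : pred T) :
  #|[set x in P | Q x]| = \sum_(x in P) Q x.
Proof.
rewrite -sum1_card big_mkcond [RHS]big_mkcond; apply: eq_bigr => x _.
by rewrite !inE; case: (x \in P); case: (Q x).
Qed.

Section SubsetSums.
Local Open Scope ring_scope.

Lemma sum_over_subsets (T : finType) (V : nmodType) (G : nat -> V) :
  \sum_(A : {set T}) G #|A| = \sum_(m < #|T|.+1) G m *+ 'C(#|T|, m).
Proof.
have -> : \sum_(A : {set T}) G #|A| =
          \sum_(A : {set T}) \sum_(m < #|T|.+1) (if #|A| == m then G m else 0).
  apply: eq_bigr => A _; have lt_A : (#|A| < #|T|.+1)%N by rewrite ltnS max_card.
  rewrite (bigD1 (Ordinal lt_A)) //= eqxx big1 ?addr0 // => m.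
  by rewrite -val_eqE /= eq_sym => /negbTE ->.
rewrite exchange_big; apply: eq_bigr => m _.
by rewrite -big_mkcond sumr_const -card_draws; congr (_ *+ _); apply: eq_card => A; rewrite inE.
Qed.

Lemma sum_from2 (V : nmodType) (F : nat -> V) (p : nat) :
  \sum_(0 <= m < p) (if (1 < m)%N then F m else 0) = \sum_(2 <= m < p) F m.
Proof.
have [le_2p | lt_p2] := leqP 2 p.
  rewrite (big_cat_nat _ (n := 2)) //= big_nat_recl // big_nat1 /= !add0r.
  by apply: eq_big_nat => m /andP[-> _].
rewrite [RHS]big_geq ?(ltnW lt_p2) //; apply: big1_seq => m; rewrite mem_index_iota.
by case/andP=> _ lt_mp; rewrite ltnNge -ltnS (leq_trans lt_mp (ltnW lt_p2)).
Qed.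

End SubsetSums.

Section Tables.
Variable n : nat.
Local Notation I := 'I_n.

(* The pairs whose product is not forced to be the zero: both factors lie outside
   A = S^2. *)
Definition free_pairs (A : {set I}) : {set I * I} := setX (~: A) (~: A).

Lemma card_free_pairs (A : {set I}) : #|free_pairs A| = ((n - #|A|) ^ 2)%N.
Proof.
have cardC : #|~: A| = (n - #|A|)%N by have := cardsC A; rewrite card_ord; lia.
by rewrite /free_pairs cardsX cardC mulnn.
Qed.

Definition nil3_shape (A : {set I}) (z : I) (f : table n) : bool :=
  [&& z \in A, 1 < #|A|, supported_in z (free_pairs A) A f
    & A :\ z \subset f @: free_pairs A].

Lemma Spow2E (f : table n) : Spow f 2 = [set f (x, y) | x in [set: I], y in [set: I]].
Proof. by []. Qed.

Lemma Spow3E (f : table n) : Spow f 3 = [set f (x, y) | x in Spow f 2, y in [set: I]].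
Proof. by []. Qed.

Lemma supported_products (A : {set I}) (z : I) (f : table n) :
  z \in A -> supported_in z (free_pairs A) A f ->
  (forall x y, (x \in A) || (y \in A) -> f (x, y) = z) /\ (forall x y, f (x, y) \in A).
Proof.
move=> zA /forallP supp; split=> [x y xyA | x y].
  by move: (supp (x, y)); rewrite !inE /=; case: (x \in A) xyA; case: (y \in A) => //= _ /eqP.
by move: (supp (x, y)); case: ifP => // _ /eqP ->.
Qed.

(* Necessity: all triple products are z, so every product with a factor in
   S^2 = A is z; |A| = 1 is excluded by the minimality of the degree. *)
Lemma nil3_shape_of_degree3 (A : {set I}) (z : I) (f : table n) :
  nil_degree f 3 -> Spow f 2 = A -> Spow f 3 = [set z] -> nil3_shape A z f.
Proof.
case/and4P=> /forallP assoc _ _ /forallP minimal S2 S3.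
have mulA x y w : f (f (x, y), w) = f (x, f (y, w)).
  by move: (assoc x) => /forallP/(_ y)/forallP/(_ w)/eqP.
have mul3 x y w : f (f (x, y), w) = z.
  by apply/set1P; rewrite -S3 Spow3E; apply: imset2_f => //; apply: imset2_f.
have zA : z \in A by rewrite -S2 -(mul3 z z z); apply: imset2_f.
have card_A : #|A| != 1 by move: (minimal (@Ordinal 3 2 isT)); rewrite /= -S2.
have forced x y : (x \in A) || (y \in A) -> f (x, y) = z.
  case/orP; rewrite -S2 => /imset2P[a b _ _ ->]; first exact: mul3.
  by rewrite -mulA mul3.
apply/and4P; split=> //.
- by rewrite ltn_neqAle eq_sym card_A card_gt0; apply/set0Pn; exists z.
- apply/forallP=> -[x y]; rewrite !inE /=; case: ifP=> [_ | xyA].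
    by rewrite -S2; apply: imset2_f.
  by rewrite forced //; move: xyA; case: (x \in A); case: (y \in A).
- apply/subsetP=> w; rewrite in_setD1 => /andP[wz].
  rewrite -{1}S2 Spow2E => /imset2P[x y _ _ w_eq].
  rewrite w_eq in wz *; apply: imset_f; rewrite !inE /=.
  by apply: contraNT wz => /nandP[/negbNE xA | /negbNE yA]; rewrite forced ?xA ?yA ?orbT.
Qed.

(* Sufficiency: every triple product is z, so associativity is automatic, and
   the covering condition makes S^2 exactly A. *)
Lemma degree3_of_nil3_shape (A : {set I}) (z : I) (f : table n) :
  nil3_shape A z f -> [/\ nil_degree f 3, Spow f 2 = A & Spow f 3 = [set z]].
Proof.
case/and4P=> zA card_A supp cover.
have [forced inA] := supported_products zA supp.
have S2 : Spow f 2 = A.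
  apply/setP=> w; apply/imset2P/idP=> [[x y _ _ ->] // | wA].
  have [-> | wz] := eqVneq w z; first by exists z z; rewrite ?forced ?zA.
  have : w \in A :\ z by rewrite !inE wz.
  by move/(subsetP cover) => /imsetP[[x y] _ ->]; exists x y.
have S3 : Spow f 3 = [set z].
  apply/setP=> w; rewrite Spow3E S2 inE; apply/imset2P/eqP=> [[x y xA _ ->] | ->].
    by rewrite forced ?xA.
  by exists z z; rewrite ?forced ?zA.
split=> //; apply/and4P; split=> //.
- apply/forallP=> x; apply/forallP=> y; apply/forallP=> w.
  by rewrite forced ?inA // [f (x, f _)]forced // inA orbT.
- by rewrite S3 cards1.
- apply/forallP=> -[[|[|[|k]]] lt_k3] //=.
    rewrite cardsT card_ord; apply: contraTneq card_A => n1.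
    by rewrite -leqNgt; apply: leq_trans (max_card A) _; rewrite card_ord n1.
  by rewrite -Spow2E S2 neq_ltn card_A orbT.
Qed.

Lemma nil3_shapeE (A : {set I}) (z : I) (f : table n) :
  [&& nil_degree f 3, Spow f 2 == A & Spow f 3 == [set z]] = nil3_shape A z f.
Proof.
apply/idP/idP=> [/and3P[nil3 /eqP S2 /eqP S3] | /degree3_of_nil3_shape[-> -> ->]].
  exact: nil3_shape_of_degree3.
by rewrite !eqxx.
Qed.

Lemma card_by_fibres (P : {set table n}) :
  (forall f, f \in P -> #|Spow f 3| = 1) ->
  #|P| = \sum_(A : {set I}) \sum_(z : I)
           #|[set f in P | (Spow f 2 == A) && (Spow f 3 == [set z])]|.
Proof.
move=> S3_single.
under eq_bigr do under eq_bigr do rewrite card_set_cond.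
under eq_bigr do rewrite exchange_big.
rewrite exchange_big -sum1_card; apply: eq_bigr => f fP; symmetry.
have [z S3] := cards1P (introT eqP (S3_single f fP)).
rewrite S3 (big_only1 (Spow f 2)) // => [|A /negbTE A_neq _]; last first.
  by apply: big1 => z' _; rewrite eq_sym A_neq.
rewrite (big_only1 z) // ?eqxx // => z' z'z _.
by apply/eqP; rewrite eqb0; apply: contra z'z => /eqP/set1_inj ->.
Qed.

Lemma card_from_fibres (P : {set table n}) (e : nat -> nat) :
  (forall f, f \in P -> #|Spow f 3| = 1) ->
  (forall A z, Posz #|[set f in P | (Spow f 2 == A) && (Spow f 3 == [set z])]|
      = if (z \in A) && (1 < #|A|) then inner_sum e #|A| else 0%R) ->
  Posz #|P| = (\sum_(2 <= m < n.+1) Posz ('C(n, m) * m) * inner_sum e m)%R.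
Proof.
move=> S3_single fibres; rewrite (card_by_fibres S3_single) (big_morph Posz PoszD erefl).
under eq_bigr do rewrite (big_morph Posz PoszD erefl).
under eq_bigr do under eq_bigr do rewrite fibres.
pose G m := if 1 < m then (Posz m * inner_sum e m)%R else 0%R.
have -> : (\sum_(A : {set I}) \sum_(z : I)
   (if (z \in A) && (1 < #|A|)%N then inner_sum e #|A| else 0) = \sum_(A : {set I}) G #|A|)%R.
  apply: eq_bigr => A _; rewrite /G; case: (1 < #|A|); last first.
    by apply: big1 => z _; rewrite andbF.
  under eq_bigr do rewrite andbT.
  by rewrite -big_mkcond sumr_const -mulr_natl natz.
rewrite sum_over_subsets card_ord -sum_from2 big_mkord; apply: eq_bigr => m _.
by rewrite /G; case: ifP => _; rewrite ?mul0rn // -mulr_natl natz PoszM mulrA.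
Qed.

Lemma nil3_card_Spow3 (f : table n) : nil_degree f 3 -> #|Spow f 3| = 1.
Proof. by case/and4P=> _ _ /eqP. Qed.

Lemma card_nil3_fibre (A : {set I}) (z : I) :
  Posz #|[set f in [set f : table n | nil_degree f 3]
            | (Spow f 2 == A) && (Spow f 3 == [set z])]|
  = if (z \in A) && (1 < #|A|) then inner_sum (fun m => (n - m) ^ 2) #|A| else 0%R.
Proof.
have -> : [set f in [set f : table n | nil_degree f 3]
             | (Spow f 2 == A) && (Spow f 3 == [set z])]
          = [set f | nil3_shape A z f] by apply/setP => f; rewrite !inE nil3_shapeE.
case: ifP => [/andP[zA card_A] | not_shape]; last first.
  by apply/eqP; rewrite eqz_nat cards_eq0; apply/eqP/setP => f; rewrite !inE /nil3_shape andbA not_shape.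
have -> : [set f | nil3_shape A z f]
          = [set f | supported_in z (free_pairs A) A f && (A :\ z \subset f @: free_pairs A)].
  by apply/setP => f; rewrite !inE /nil3_shape zA card_A.
have card_Az : #|A :\ z| = #|A|.-1 by rewrite [#|A|](cardsD1 z) zA.
rewrite -/(ncover z (free_pairs A) A (A :\ z)) (ncoverE z _ card_Az (subD1set _ _)).
by rewrite inner_sumE ?card_free_pairs // (leq_trans _ card_A).
Qed.

(* A k-set has k(k+1)/2 pairs x <= y: twice their number is k^2 (all pairs,
   split by the swap into x <= y and x > y) plus k (the diagonal). *)
Lemma card_sorted_pairs (X : {set I}) :
  #|[set p in setX X X | (p.1 <= p.2)%N]| = (#|X| * (#|X| + 1) %/ 2)%N.
Proof.
set E := setX X X; set Le := [set p in E | (p.1 <= p.2)%N].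
set Lt := [set p in E | (p.1 < p.2)%N]; set Gt := [set p in E | (p.2 < p.1)%N].
set Dg := [set p in E | p.1 == p.2 :> nat].
have Le_Gt : (#|Le| + #|Gt| = #|X| * #|X|)%N.
  rewrite -cardsX -(cardsID [set p : I * I | (p.1 <= p.2)%N] E).
  by congr (_ + _)%N; apply: eq_card => -[x y]; rewrite !inE /=;
    case: ltngtP; rewrite /= ?andbF ?andbT.
have Lt_Dg : (#|Lt| + #|Dg| = #|Le|)%N.
  rewrite -(cardsID [set p : I * I | (p.1 < p.2)%N] Le).
  by congr (_ + _)%N; apply: eq_card => -[x y]; rewrite !inE /=;
    case: ltngtP; rewrite /= ?andbF ?andbT.
have Gt_Lt : #|Gt| = #|Lt|.
  have -> : Gt = [set (p.2, p.1) | p in Lt].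
    apply/setP=> -[x y]; rewrite !inE /=.
    apply/idP/imsetP=> [Gxy | [[u v] Luv [-> ->]]].
      by exists (y, x) => //; move: Gxy; rewrite !inE /= => /andP[/andP[-> ->] ->].
    by move: Luv; rewrite !inE /= => /andP[/andP[-> ->] ->].
  by rewrite card_imset // => -[a b] [c d] [-> ->].
have Dg_X : #|Dg| = #|X|.
  rewrite -(card_imset X (f := fun x : I => (x, x))); last by move=> x y [].
  apply: eq_card => -[x y]; rewrite !inE /=; apply/idP/imsetP=> [|[u uX [-> ->]]].
    by case/andP=> /andP[xX _] /eqP/val_inj <-; exists x.
  by rewrite uX eqxx.
have double_Le : (2 * #|Le| = #|X| * (#|X| + 1))%N by lia.
by rewrite -double_Le mulKn.
Qed.

(* For commutative tables only the unordered free pairs carry free values. *)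
Definition sorted_free_pairs (A : {set I}) : {set I * I} :=
  [set p in free_pairs A | (p.1 <= p.2)%N].

Lemma card_sorted_free_pairs (A : {set I}) :
  #|sorted_free_pairs A| = ((n - #|A|) * (n - #|A| + 1) %/ 2)%N.
Proof.
have cardC : #|~: A| = (n - #|A|)%N by have := cardsC A; rewrite card_ord; lia.
by rewrite /sorted_free_pairs /free_pairs card_sorted_pairs cardC.
Qed.

Definition sort_pair (p : I * I) : I * I := if (p.1 <= p.2)%N then p else (p.2, p.1).

Lemma sort_pair_free (A : {set I}) (p : I * I) :
  (sort_pair p \in sorted_free_pairs A) = (p \in free_pairs A).
Proof.
case: p => x y; rewrite /sort_pair /=; case: leqP => [le_xy | lt_yx]; rewrite !inE /=.
  by rewrite le_xy andbT.
by rewrite (ltnW lt_yx) andbT andbC.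
Qed.

Lemma sort_pair_id (A : {set I}) (p : I * I) : p \in sorted_free_pairs A -> sort_pair p = p.
Proof. by rewrite /sort_pair inE => /andP[_ ->]. Qed.

Lemma sort_pair_swap (x y : I) : sort_pair (x, y) = sort_pair (y, x).
Proof.
rewrite /sort_pair /=; case: (ltngtP x y) => // eq_xy.
by have -> : x = y by apply: val_inj.
Qed.

(* Commutative tables of the shape are the symmetrisations of the tables that
   are supported on the sorted free pairs and cover A \ z; symmetrisation is
   injective on the latter. *)
Lemma card_comm_shape (A : {set I}) (z : I) :
  #|[set f : table n | [&& supported_in z (free_pairs A) A f,
                          A :\ z \subset f @: free_pairs A & is_comm f]]|
  = ncover z (sorted_free_pairs A) A (A :\ z).
Proof.
pose symmetrize (g : table n) : table n := [ffun p => g (sort_pair p)].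
set S := [set g : table n | supported_in z (sorted_free_pairs A) A g
                            && (A :\ z \subset g @: sorted_free_pairs A)].
have -> : [set f : table n | [&& supported_in z (free_pairs A) A f,
                               A :\ z \subset f @: free_pairs A & is_comm f]]
          = symmetrize @: S.
  apply/setP => f; rewrite inE; apply/idP/imsetP.
  - case/and3P=> /forallP supp cover /forallP comm.
    have f_sorted x y : f (sort_pair (x, y)) = f (x, y).
      by rewrite /sort_pair /=; case: ifP => //; move/forallP: (comm x) => /(_ y) /eqP.
    exists [ffun p => if p \in sorted_free_pairs A then f p else z].
      rewrite inE; apply/andP; split.
        apply/forallP => p; rewrite ffunE; case: ifP => pS; rewrite ?pS //.
        by move: (supp p); rewrite -sort_pair_free (sort_pair_id pS) pS.
      apply/subsetP => c /(subsetP cover) /imsetP [[x y] xyE ->].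
      apply/imsetP; exists (sort_pair (x, y)); first by rewrite sort_pair_free.
      by rewrite ffunE sort_pair_free xyE f_sorted.
    apply/ffunP => -[x y]; rewrite !ffunE sort_pair_free f_sorted; case: ifP => // xyE.
    by move: (supp (x, y)); rewrite xyE => /eqP.
  - case=> g; rewrite inE => /andP[/forallP supp cover] ->.
    apply/and3P; split.
    + apply/forallP => p; rewrite ffunE; move: (supp (sort_pair p)).
      by rewrite sort_pair_free.
    + apply/subsetP => c /(subsetP cover) /imsetP [p pS ->].
      apply/imsetP; exists p; last by rewrite ffunE (sort_pair_id pS).
      by rewrite -sort_pair_free (sort_pair_id pS).
    + by apply/forallP => x; apply/forallP => y; rewrite !ffunE sort_pair_swap.
rewrite card_in_imset // => g1 g2; rewrite !inE => /andP[/forallP supp1 _] /andP[/forallP supp2 _].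
move=> /ffunP sym_eq; apply/ffunP => p; case pS: (p \in sorted_free_pairs A).
  by move: (sym_eq p); rewrite !ffunE (sort_pair_id pS).
by move: (supp1 p) (supp2 p); rewrite pS => /eqP -> /eqP ->.
Qed.

Lemma card_comm_nil3_fibre (A : {set I}) (z : I) :
  Posz #|[set f in [set f : table n | is_comm f && nil_degree f 3]
            | (Spow f 2 == A) && (Spow f 3 == [set z])]|
  = if (z \in A) && (1 < #|A|)
    then inner_sum (fun m => (n - m) * (n - m + 1) %/ 2) #|A| else 0%R.
Proof.
have -> : [set f in [set f : table n | is_comm f && nil_degree f 3]
             | (Spow f 2 == A) && (Spow f 3 == [set z])]
          = [set f | is_comm f && nil3_shape A z f].
  by apply/setP => f; rewrite !inE -andbA nil3_shapeE.
case: ifP => [/andP[zA card_A] | not_shape]; last first.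
  apply/eqP; rewrite eqz_nat cards_eq0; apply/eqP/setP => f.
  by rewrite !inE /nil3_shape [(z \in A) && _]andbA not_shape andbF.
have -> : [set f | is_comm f && nil3_shape A z f]
          = [set f : table n | [&& supported_in z (free_pairs A) A f,
                                  A :\ z \subset f @: free_pairs A & is_comm f]].
  by apply/setP => f; rewrite !inE /nil3_shape zA card_A /= andbC andbA.
have card_Az : #|A :\ z| = #|A|.-1 by rewrite [#|A|](cardsD1 z) zA.
rewrite card_comm_shape (ncoverE z _ card_Az (subD1set _ _)).
by rewrite inner_sumE ?card_sorted_free_pairs // (leq_trans _ card_A).
Qed.

Lemma card_nil3 : Posz #|[set f : table n | nil_degree f 3]| =
  (\sum_(2 <= m < n.+1) Posz ('C(n, m) * m) * inner_sum (fun m => ((n - m) ^ 2)%N) m)%R.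
Proof.
apply: card_from_fibres; last exact: card_nil3_fibre.
by move=> f; rewrite inE; apply: nil3_card_Spow3.
Qed.

Lemma card_comm_nil3 : Posz #|[set f : table n | is_comm f && nil_degree f 3]| =
  (\sum_(2 <= m < n.+1)
     Posz ('C(n, m) * m) * inner_sum (fun m => ((n - m) * (n - m + 1) %/ 2)%N) m)%R.
Proof.
apply: card_from_fibres; last exact: card_comm_nil3_fibre.
by move=> f; rewrite inE => /andP[_]; apply: nil3_card_Spow3.
Qed.

End Tables.

Section FloorBounds.
Local Open Scope R_scope.

Lemma le_floor_nat (x : R) (m : nat) : INR m <= x -> (m <= Z.to_nat (Int_part x))%N.
Proof.
move=> le_mx; apply/leP; rewrite /Int_part.
have [gt_up _] := archimed x.
have : Z.lt (Z.of_nat m) (up x) by apply: lt_IZR; rewrite -INR_IZR_INZ; lra.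
lia.
Qed.

(* sqrt x <= y for y >= 0 with x <= y^2 (also when x < 0, where sqrt x = 0). *)
Lemma sqrt_le_of_le_sq (x y : R) : 0 <= y -> x <= y * y -> sqrt x <= y.
Proof.
move=> y_ge0 le_xyy; have [x_le0 | x_gt0] := Rle_or_lt x 0.
  by rewrite sqrt_neg_0.
by rewrite -(sqrt_square y y_ge0); apply: sqrt_le_1_alt.
Qed.

(* m <= a(n) as soon as m - 1 <= (n - m)^2, i.e. n <= k^2 + k + 1 for k = n - m. *)
Lemma a_bound_ge (n m : nat) :
  (m <= n)%N -> (m.-1 <= (n - m) ^ 2)%N -> (m <= a_bound n)%N.
Proof.
move=> le_mn le_m1; rewrite /a_bound; apply: le_floor_nat.
set k := (n - m)%N in le_m1.
have n_eq : n = (m + k)%N by rewrite /k; lia.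
have le_n : (n <= k * k + k + 1)%coq_nat by apply/leP; rewrite -mulnn in le_m1; lia.
have le_nR : INR n <= INR k * INR k + INR k + 1.
  by rewrite -mult_INR -plus_INR -S_INR -Nat.add_1_r; apply: le_INR.
have le_sqrt : sqrt (INR n - 3 / 4) <= INR k + / 2.
  by apply: sqrt_le_of_le_sq; [have := pos_INR k | ]; nra.
have nR : INR n = INR m + INR k by rewrite n_eq plus_INR.
lra.
Qed.

Lemma c_bound_ge (n m : nat) :
  (m <= n)%N -> (m.-1 <= (n - m) * (n - m + 1) %/ 2)%N -> (m <= c_bound n)%N.
Proof.
move=> le_mn le_m1; rewrite /c_bound; apply: le_floor_nat.
set k := (n - m)%N in le_m1.
have n_eq : n = (m + k)%N by rewrite /k; lia.
have le_2m1 : (2 * m.-1 <= k * (k + 1))%N.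
  by apply: leq_trans (leq_mul (leqnn 2) le_m1) _; rewrite mulnC leq_divM.
have le_n : (2 * n <= k * k + 3 * k + 2)%coq_nat by apply/leP; lia.
have le_nR : 2 * INR n <= INR k * INR k + 3 * INR k + 2.
  have -> : 2 = INR 2 by rewrite /=; lra.
  have -> : 3 = INR 3 by rewrite /=; lra.
  by rewrite -!mult_INR -!plus_INR; apply: le_INR.
have le_sqrt : sqrt (2 * INR n + / 4) <= INR k + 3 / 2.
  by apply: sqrt_le_of_le_sq; [have := pos_INR k | ]; nra.
have nR : INR n = INR m + INR k by rewrite n_eq plus_INR.
lra.
Qed.

End FloorBounds.

Section Truncation.
Local Open Scope ring_scope.

Lemma sum_from2_bound (W : nat -> int) (p q : nat) :
  (forall m, (1 < m)%N -> (minn p q <= m)%N -> W m = 0) ->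
  \sum_(2 <= m < p) W m = \sum_(2 <= m < q) W m.
Proof.
wlog le_pq : p q / (p <= q)%N.
  move=> gen vanish; have [le_pq | lt_qp] := leqP p q; first exact: gen.
  by symmetry; apply: gen => [|m]; [exact: ltnW | rewrite minnC; apply: vanish].
have min_p : minn p q = p by apply/minn_idPl.
rewrite min_p => vanish; have [le_2p | lt_p2] := leqP 2 p.
  rewrite [RHS](big_cat_nat _ (n := p)) //= [X in _ = _ + X]big1_seq ?addr0 // => m.
  by rewrite mem_index_iota => /andP[_ /andP[le_pm _]]; apply: vanish => //; lia.
rewrite big_geq ?(ltnW lt_p2) //; symmetry; apply: big1_seq => m.
by rewrite mem_index_iota => /andP[_ /andP[le_2m _]]; apply: vanish => //; lia.
Qed.

(* A term of the main sum vanishes when m > n, since C(n, m) = 0, and when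
   m > b for a bound b with m <= b whenever m - 1 <= e m, since then there are
   fewer free products than elements of S^2 \ {0} to produce. *)
Lemma term_eq0 (e : nat -> nat) (n b m : nat) :
  (forall k, (k <= n)%N -> (k.-1 <= e k)%N -> (k <= b)%N) ->
  (1 < m)%N -> (minn n.+1 b.+1 <= m)%N ->
  Posz ('C(n, m) * m) * inner_sum e m = 0.
Proof.
move=> bound lt1m le_min.
have [le_mn | lt_nm] := leqP m n; last by rewrite bin_small // mul0n mul0r.
rewrite inner_sum_eq0 ?mulr0 // ltnNge; apply/negP => le_m1.
by have := bound m le_mn le_m1; move: le_min le_mn; lia.
Qed.

End Truncation.

Local Open Scope ring_scope.

Theorem theorem2p1 (n : nat) :
  (#|[set f : table n | nil_degree f 3]|%:Z =
     \sum_(2 <= m < (a_bound n).+1)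
        ('C(n, m) * m)%:Z *
        \sum_(0 <= i < m)
           (-1) ^+ i * ('C(m.-1, i))%:Z * (((m - i) ^ ((n - m) ^ 2))%N)%:Z)
  /\
  (#|[set f : table n | is_comm f && nil_degree f 3]|%:Z =
     \sum_(2 <= m < (c_bound n).+1)
        ('C(n, m) * m)%:Z *
        \sum_(0 <= i < m)
           (-1) ^+ i * ('C(m.-1, i))%:Z
             * (((m - i) ^ ((n - m) * (n - m + 1) %/ 2))%N)%:Z).
Proof.
split.
- rewrite card_nil3; apply: sum_from2_bound => m lt1m le_min.
  by apply: term_eq0 lt1m le_min => k; apply: a_bound_ge.
- rewrite card_comm_nil3; apply: sum_from2_bound => m lt1m le_min.
  by apply: term_eq0 lt1m le_min => k; apply: c_bound_ge.
Qed.
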